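(* Let $(T_n)_{n\ge1}$ be a plane-oriented recursive tree and let $D_{n,j}$ be the degree of node $j$ in $T_n$. For fixed integers $2\le j\le n$ and every $d\in\{1,2,\dots,n-j+1\}$, $$\mathbb{P}(D_{n,j}=d)=\frac{\Gamma(d)\,\Gamma\!\left(j-\tfrac12\right)}{\Gamma\!\left(n-\tfrac12\right)}\sum_{i=0}^{d-1}\frac{(-1)^i\,\Gamma\!\left(n-1-\tfrac{i}{2}\right)}{\Gamma(i+1)\,\Gamma(d-i)\,\Gamma\!\left(j-1-\tfrac{i}{2}\right)},$$ with the convention $1/\Gamma(m)=0$ for nonpositive integers $m$.
   Context: A plane-oriented recursive tree (PORT) is the random sequence of trees $(T_n)_{n\ge1}$ defined as follows. $T_1$ is a single node labeled $1$ (the root). For $n\ge2$, $T_n$ is obtained from $T_{n-1}$ by adding a node labeled $n$ and an edge joining it to a node $i\in\{1,\dots,n-1\}$ of $T_{n-1}$, where, conditionally on $T_1,\dots,T_{n-1}$, node $i$ is chosen with probability $(c_{n-1,i}+1)/(2n-3)$, with $c_{n-1,i}$ the number of children of $i$ in $T_{n-1}$ (nodes previously attached to $i$). $D_{n,j}$ denotes the degree (number of incident edges) of the node labeled $j$ in $T_n$. Equivalently, node $i\ge2$ is chosen with probability $D_{n-1,i}/(2n-3)$ and the root with probability $(D_{n-1,1}+1)/(2n-3)$. *)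

From Stdlib Require Import Reals ZArith Arith List.
Open Scope R_scope.

(** A tree T_n on nodes 1..n is encoded by its list of parents
    [s = [p_2; p_3; ...; p_n]] where p_t in {1..t-1} is the node that the
    node labelled t was attached to (in T_t).  *)

Definition children (s : list nat) (i : nat) : nat :=
  List.count_occ Nat.eq_dec s i.

Definition degree (s : list nat) (j : nat) : nat :=
  children s j + (if Nat.leb 2 j then 1 else 0).

(** [port_expect m s f]: expectation of [f] (applied to the final parent list)
    when starting from the tree encoded by [s] (which has [length s + 1]
    nodes) and performing [m] further PORT growth steps. *)
Fixpoint port_expect (m : nat) (s : list nat) (f : list nat -> R) : R :=
  match m with
  | O => f s
  | S m' =>
      let k := (length s + 2)%nat in
      fold_right Rplus 0
        (map (fun i => (INR (children s i) + 1) / (2 * INR k - 3)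
                       * port_expect m' (s ++ i :: nil) f)
             (seq 1 (k - 1)))
  end.

Definition port_deg_prob (n j d : nat) : R :=
  port_expect (n - 1) nil (fun s => if Nat.eqb (degree s j) d then 1 else 0).

(** * Euler's Gamma function at half-integers: [Gamma_half m] = Γ(m/2).
    Determined by Γ(1/2) = sqrt PI, Γ(1) = 1, Γ(x+1) = x Γ(x). *)
Fixpoint gamma_pos (k : nat) : R :=
  match k with
  | O => 0 (* pole; never used *)
  | S O => sqrt PI
  | S (S k') => match k' with
                | O => 1
                | _ => INR k' / 2 * gamma_pos k'
                end
  end.

(** For negative odd m = -(2p+1): Γ(m/2) = Γ(1/2) / ∏_{t=0}^{p} ((m+2t)/2). *)
Fixpoint neg_prod (m : Z) (p : nat) : R :=
  match p with
  | O => IZR m / 2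
  | S p' => neg_prod m p' * (IZR m + 2 * INR p) / 2
  end.

Definition Gamma_half (m : Z) : R :=
  if (0 <? m)%Z then gamma_pos (Z.to_nat m)
  else if Z.even m then 0 (* pole at a nonpositive integer *)
  else sqrt PI / neg_prod m (Z.to_nat ((- m - 1) / 2)).

Definition rgamma_half (m : Z) : R :=
  if ((m <=? 0)%Z && Z.even m)%bool then 0 else / Gamma_half m.

From Stdlib Require Import Reals ZArith Arith List Lia Lra.
Open Scope R_scope.

(* When node [k] arrives, the total attachment weight is [2k - 3], and a non-root
   node of degree [c] receives weight [c]; so the degree of node [j] is a Markov
   chain on its own, started at [1] when [j] is born.  Its law after [m] further
   steps, [p_m(d)], obeys [p_(m+1)(d) = (d-1)/D p_m(d-1) + (1 - d/D) p_m(d)] with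
   [D = 2(j+m) - 1].  The alternating sum
   [sum_i C(d-1, i) (-1)^i prod_(u<m) (2j-2-i+2u)/(2j-1+2u)] satisfies the same
   recursion (because [(e - i) C(e, i) = e C(e-1, i)]) and the same initial
   values, and its products are quotients of Gamma values at half-integers. *)

Definition Rsum_list (l : list nat) (F : nat -> R) : R := fold_right Rplus 0 (map F l).

Lemma Rsum_list_cons a l F : Rsum_list (a :: l) F = F a + Rsum_list l F.
Proof. reflexivity. Qed.

Lemma Rsum_list_ext l F G : (forall i, In i l -> F i = G i) -> Rsum_list l F = Rsum_list l G.
Proof.
  intros E; unfold Rsum_list; f_equal; apply map_ext_in; exact E.
Qed.

Lemma Rsum_list_plus l F G : Rsum_list l (fun i => F i + G i) = Rsum_list l F + Rsum_list l G.
Proof. induction l; rewrite ?Rsum_list_cons; [unfold Rsum_list; simpl; ring|]. rewrite IHl; ring. Qed.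

Lemma Rsum_list_scal l F a : Rsum_list l (fun i => a * F i) = a * Rsum_list l F.
Proof. induction l; rewrite ?Rsum_list_cons; [unfold Rsum_list; simpl; ring|]. rewrite IHl; ring. Qed.

Lemma Rsum_list_const l a : Rsum_list l (fun _ => a) = INR (length l) * a.
Proof.
  induction l; rewrite ?Rsum_list_cons; [unfold Rsum_list; simpl; ring|].
  rewrite IHl, length_cons, S_INR; ring.
Qed.

Lemma Rsum_list_delta l F j : NoDup l -> In j l ->
  Rsum_list l (fun i => if Nat.eqb i j then F i else 0) = F j.
Proof.
  induction l as [|a l IH]; intros Hnd Hj; [destruct Hj|].
  inversion Hnd as [|? ? Ha Hnd']; subst; rewrite Rsum_list_cons.
  destruct (Nat.eqb_spec a j) as [<-|Haj].
  - rewrite (Rsum_list_ext _ _ (fun _ => 0)), Rsum_list_const; [ring|].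
    intros i Hi; destruct (Nat.eqb_spec i a); [subst; contradiction | reflexivity].
  - destruct Hj as [|Hj]; [contradiction|]. rewrite IH by assumption; ring.
Qed.

Definition is_parent_list (s : list nat) : Prop :=
  forall x, In x s -> (1 <= x <= length s)%nat.

Lemma is_parent_list_snoc s i : is_parent_list s -> (1 <= i <= length s + 1)%nat ->
  is_parent_list (s ++ i :: nil).
Proof.
  intros Hs Hi x Hx; rewrite length_app; simpl.
  apply in_app_or in Hx; destruct Hx as [Hx|[<-|[]]]; [apply Hs in Hx|]; lia.
Qed.

Lemma children_cons a s i :
  INR (children (a :: s) i) = INR (children s i) + (if Nat.eqb i a then 1 else 0).
Proof.
  unfold children; simpl.
  destruct (Nat.eq_dec a i), (Nat.eqb_spec i a); subst; try congruence;
    rewrite ?S_INR; ring.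
Qed.

Lemma Rsum_list_children s N : (forall x, In x s -> (1 <= x <= N)%nat) ->
  Rsum_list (seq 1 N) (fun i => INR (children s i)) = INR (length s).
Proof.
  induction s as [|a s IH]; intros Hs.
  - rewrite (Rsum_list_ext _ _ (fun _ => 0)), Rsum_list_const by reflexivity.
    simpl; ring.
  - rewrite (Rsum_list_ext _ _ _ (fun i _ => children_cons a s i)), Rsum_list_plus.
    rewrite IH by (intros; apply Hs; right; assumption).
    rewrite (Rsum_list_delta _ (fun _ => 1)); [rewrite length_cons, S_INR; ring|apply seq_NoDup|].
    apply in_seq; specialize (Hs a (or_introl eq_refl)); lia.
Qed.

Lemma degree_snoc s i j :
  degree (s ++ i :: nil) j = if Nat.eqb i j then S (degree s j) else degree s j.
Proof.
  unfold degree, children; rewrite count_occ_app; simpl.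
  destruct (Nat.eq_dec i j), (Nat.eqb_spec i j); try contradiction; lia.
Qed.

Lemma degree_new_node s j : is_parent_list s -> (2 <= j)%nat -> (length s < j)%nat ->
  degree s j = 1%nat.
Proof.
  intros Hs Hj Hlen; unfold degree.
  replace (Nat.leb 2 j) with true by (symmetry; apply Nat.leb_le; lia).
  replace (children s j) with 0%nat; [reflexivity|].
  symmetry; apply count_occ_not_In; intros Hin; apply Hs in Hin; lia.
Qed.

Definition attach_prob (s : list nat) (i : nat) : R :=
  (INR (children s i) + 1) / (2 * INR (length s + 2) - 3).

Lemma port_expect_S m s f : port_expect (S m) s f =
  Rsum_list (seq 1 (length s + 1)) (fun i => attach_prob s i * port_expect m (s ++ i :: nil) f).
Proof.
  cbn [port_expect]; replace (length s + 2 - 1)%nat with (length s + 1)%nat by lia.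
  reflexivity.
Qed.

Lemma attach_prob_sum1 s : is_parent_list s ->
  Rsum_list (seq 1 (length s + 1)) (attach_prob s) = 1.
Proof.
  intros Hs; unfold attach_prob.
  rewrite (Rsum_list_ext _ _
    (fun i => / (2 * INR (length s + 2) - 3) * (INR (children s i) + 1)))
    by (intros; unfold Rdiv; ring).
  rewrite Rsum_list_scal, Rsum_list_plus, Rsum_list_const, length_seq.
  rewrite Rsum_list_children by (intros x Hx; apply Hs in Hx; lia).
  rewrite !plus_INR; simpl (INR 1); simpl (INR 2).
  field; pose proof (pos_INR (length s)); lra.
Qed.

Lemma port_expect_const m s f c : is_parent_list s ->
  (forall s', is_parent_list s' -> length s' = (length s + m)%nat -> f s' = c) ->
  port_expect m s f = c.
Proof.
  revert s; induction m as [|m IH]; intros s Hs Hf.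
  - apply Hf; [assumption | lia].
  - rewrite port_expect_S, <- (Rmult_1_l c), <- (attach_prob_sum1 s Hs).
    rewrite Rmult_comm, <- Rsum_list_scal; apply Rsum_list_ext.
    intros i Hi; apply in_seq in Hi.
    rewrite (IH (s ++ i :: nil)); [ring | apply is_parent_list_snoc; [assumption | lia] |].
    intros s' Hs' Hlen; apply Hf; [assumption|]; rewrite Hlen, length_app; simpl; lia.
Qed.

Lemma port_expect_add a b s f :
  port_expect (a + b) s f = port_expect a s (fun s' => port_expect b s' f).
Proof.
  revert s; induction a as [|a IH]; intros s; [reflexivity|].
  simpl plus; rewrite !port_expect_S; apply Rsum_list_ext; intros; rewrite IH; reflexivity.
Qed.

(* [degree_chain m k c g]: expectation of [g] of the degree after [m] steps of a
   non-root node of current degree [c], when the next node to arrive is [k]. *)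
Fixpoint degree_chain (m k c : nat) (g : nat -> R) : R :=
  match m with
  | O => g c
  | S m' => INR c / (2 * INR k - 3) * degree_chain m' (S k) (S c) g
            + (1 - INR c / (2 * INR k - 3)) * degree_chain m' (S k) c g
  end.

Lemma port_expect_degree j g m s : is_parent_list s -> (2 <= j <= length s + 1)%nat ->
  port_expect m s (fun s' => g (degree s' j)) = degree_chain m (length s + 2) (degree s j) g.
Proof.
  revert s; induction m as [|m IH]; intros s Hs Hj; [reflexivity|].
  set (c := degree s j).
  set (next := fun c' => degree_chain m (S (length s + 2)) c' g).
  assert (Hstep : forall i, In i (seq 1 (length s + 1)) ->
    attach_prob s i * port_expect m (s ++ i :: nil) (fun s' => g (degree s' j))
    = next c * attach_prob s i
      + (if Nat.eqb i j then attach_prob s i * (next (S c) - next c) else 0)).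
  { intros i Hi; apply in_seq in Hi.
    rewrite IH; [| apply is_parent_list_snoc; [assumption | lia] | rewrite length_app; simpl; lia].
    rewrite length_app, degree_snoc; simpl length.
    replace (length s + 1 + 2)%nat with (S (length s + 2)) by lia.
    fold c; destruct (Nat.eqb i j); unfold next; ring. }
  assert (Hj_attach : attach_prob s j = INR c / (2 * INR (length s + 2) - 3)).
  { unfold attach_prob, c, degree.
    replace (Nat.leb 2 j) with true by (symmetry; apply Nat.leb_le; lia).
    rewrite (plus_INR (children s j) 1); reflexivity. }
  rewrite port_expect_S, (Rsum_list_ext _ _ _ Hstep), Rsum_list_plus, Rsum_list_scal.
  rewrite attach_prob_sum1, (Rsum_list_delta _ (fun i => attach_prob s i * (next (S c) - next c)))
    by (assumption || apply seq_NoDup || (apply in_seq; lia)).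
  rewrite Hj_attach; cbn [degree_chain]; fold (next (S c)) (next c); ring.
Qed.

Lemma degree_chain_S m k c g : degree_chain (S m) k c g =
  degree_chain m k c (fun c' => INR c' / (2 * INR (k + m) - 3) * g (S c')
                                + (1 - INR c' / (2 * INR (k + m) - 3)) * g c').
Proof.
  revert k c; induction m as [|m IH]; intros k c.
  - simpl; rewrite Nat.add_0_r; reflexivity.
  - cbn [degree_chain] in *; rewrite !IH.
    replace (S k + m)%nat with (k + S m)%nat by lia; reflexivity.
Qed.

Lemma degree_chain_linear m k c f h a b :
  degree_chain m k c (fun x => a * f x + b * h x)
  = a * degree_chain m k c f + b * degree_chain m k c h.
Proof.
  revert k c; induction m as [|m IH]; intros k c; simpl; [reflexivity|].
  rewrite !IH; ring.
Qed.

Lemma degree_chain_ext m k c f h : (forall x, f x = h x) ->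
  degree_chain m k c f = degree_chain m k c h.
Proof.
  intros E; revert k c; induction m as [|m IH]; intros k c; simpl; [apply E|].
  rewrite !IH; reflexivity.
Qed.

Definition degree_dist (j m d : nat) : R :=
  degree_chain m (j + 1) 1 (fun c => if Nat.eqb c d then 1 else 0).

Lemma port_deg_prob_degree_dist j m d : (2 <= j)%nat ->
  port_deg_prob (j + m) j d = degree_dist j m d.
Proof.
  intros Hj; unfold port_deg_prob.
  replace (j + m - 1)%nat with (j - 1 + m)%nat by lia.
  rewrite port_expect_add; apply port_expect_const; [intros x []|].
  intros s Hs Hlen; simpl in Hlen.
  rewrite (port_expect_degree j (fun c => if Nat.eqb c d then 1 else 0)) by (assumption || lia).
  rewrite degree_new_node by (assumption || lia).
  unfold degree_dist; f_equal; lia.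
Qed.

Lemma degree_dist_S j m d : degree_dist j (S m) (S d) =
  INR d / (2 * INR j - 1 + 2 * INR m) * degree_dist j m d
  + (1 - INR (S d) / (2 * INR j - 1 + 2 * INR m)) * degree_dist j m (S d).
Proof.
  unfold degree_dist; rewrite degree_chain_S, <- degree_chain_linear.
  replace (2 * INR (j + 1 + m) - 3) with (2 * INR j - 1 + 2 * INR m)
    by (rewrite !plus_INR; simpl; ring).
  apply degree_chain_ext; intros x.
  destruct (Nat.eqb_spec x d), (Nat.eqb_spec x (S d)); subst;
    rewrite ?Nat.eqb_refl; try (rewrite (proj2 (Nat.eqb_neq _ _)) by lia); try lia; ring.
Qed.

Fixpoint prodR (k : nat) (f : nat -> R) : R :=
  match k with O => 1 | S k' => prodR k' f * f k' end.

Definition degree_ratio (j m i : nat) : R :=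
  prodR m (fun u => (2 * INR j - 2 - INR i + 2 * INR u) / (2 * INR j - 1 + 2 * INR u)).

Definition degree_formula (j m e : nat) : R :=
  sum_f_R0 (fun i => C e i * (-1) ^ i * degree_ratio j m i) e.

Lemma C_diag n : C n n = 1.
Proof.
  unfold C; rewrite Nat.sub_diag; simpl (fact 0).
  pose proof (INR_fact_neq_0 n); simpl INR; field; assumption.
Qed.

Lemma degree_formula_0 j e : degree_formula j 0 e = 0 ^ e.
Proof.
  replace (0 ^ e) with ((-1 + 1) ^ e) by (f_equal; lra).
  rewrite binomial; apply sum_eq; intros i _.
  rewrite pow1; reflexivity.
Qed.

Lemma degree_formula_S0 j m : (1 <= j)%nat ->
  degree_formula j (S m) 0 = (1 - INR 1 / (2 * INR j - 1 + 2 * INR m)) * degree_formula j m 0.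
Proof.
  intros Hj; apply le_INR in Hj; pose proof (pos_INR m).
  unfold degree_formula; simpl sum_f_R0; unfold degree_ratio; cbn [prodR].
  simpl INR in *; field; lra.
Qed.

Lemma degree_formula_S j m e : (1 <= j)%nat ->
  degree_formula j (S m) (S e) =
  INR (S e) / (2 * INR j - 1 + 2 * INR m) * degree_formula j m e
  + (1 - INR (S (S e)) / (2 * INR j - 1 + 2 * INR m)) * degree_formula j m (S e).
Proof.
  intros Hj; apply le_INR in Hj; pose proof (pos_INR m) as Hm.
  set (D := 2 * INR j - 1 + 2 * INR m).
  assert (HD : 0 < D) by (unfold D; simpl in Hj; lra).
  assert (Hratio : forall i, degree_ratio j (S m) i
    = degree_ratio j m i * ((D - 1 - INR i) / D)).
  { intros i; unfold degree_ratio; cbn [prodR]; fold D; do 2 f_equal; unfold D; ring. }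
  unfold degree_formula; rewrite !tech5, !Hratio, C_diag.
  rewrite (sum_eq _ (fun i => C e i * (-1) ^ i * degree_ratio j m i * (INR (S e) / D)
      + C (S e) i * (-1) ^ i * degree_ratio j m i * (1 - INR (S (S e)) / D))).
  - rewrite plus_sum, <- !scal_sum.
    generalize (sum_f_R0 (fun i => C e i * (-1) ^ i * degree_ratio j m i) e).
    generalize (sum_f_R0 (fun i => C (S e) i * (-1) ^ i * degree_ratio j m i) e).
    intros; rewrite !S_INR; field; lra.
  - intros i Hi; rewrite Hratio, (pascal_step2 e i Hi), minus_INR by lia.
    assert (INR (S e) - INR i <> 0) by (rewrite S_INR; apply le_INR in Hi; lra).
    rewrite !S_INR in *; field; lra.
Qed.

Lemma degree_dist_eq_formula j m e : (1 <= j)%nat ->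
  degree_dist j m (S e) = degree_formula j m e.
Proof.
  intros Hj; revert e; induction m as [|m IH]; intros e.
  - rewrite degree_formula_0; unfold degree_dist; destruct e; simpl; ring.
  - rewrite degree_dist_S; destruct e as [|e].
    + rewrite IH, degree_formula_S0 by assumption; simpl (INR 0); unfold Rdiv; ring.
    + rewrite !IH, degree_formula_S by assumption; reflexivity.
Qed.

Lemma gamma_pos_SS k : (1 <= k)%nat -> gamma_pos (S (S k)) = INR k / 2 * gamma_pos k.
Proof. intros Hk; destruct k; [lia | reflexivity]. Qed.

Lemma gamma_pos_gt0 k : (1 <= k)%nat -> 0 < gamma_pos k.
Proof.
  intros Hk.
  assert (H : forall n, 0 < gamma_pos (S n) /\ 0 < gamma_pos (S (S n))).
  { induction n as [|n [IH1 IH2]].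
    - split; simpl; [apply sqrt_lt_R0, PI_RGT_0 | lra].
    - split; [assumption|]; rewrite gamma_pos_SS by lia.
      apply Rmult_lt_0_compat; [|assumption].
      apply Rdiv_lt_0_compat; [apply lt_0_INR; lia | lra]. }
  destruct k; [lia | apply H].
Qed.

Lemma gamma_pos_even k : gamma_pos (2 * k + 2) = INR (fact k).
Proof.
  induction k as [|k IH]; [reflexivity|].
  replace (2 * S k + 2)%nat with (S (S (2 * k + 2))) by lia.
  rewrite gamma_pos_SS, IH by lia; rewrite fact_simpl, plus_INR, !mult_INR, !S_INR.
  simpl INR; field.
Qed.

Lemma Gamma_half_of_nat k : (1 <= k)%nat -> Gamma_half (Z.of_nat k) = gamma_pos k.
Proof.
  intros Hk; unfold Gamma_half.
  replace (0 <? Z.of_nat k)%Z with true by (symmetry; apply Z.ltb_lt; lia).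
  rewrite Nat2Z.id; reflexivity.
Qed.

Definition nonpole (m : Z) : Prop := (0 < m)%Z \/ Z.odd m = true.

Lemma nonpole_or_pole m : nonpole m \/ ((m <= 0)%Z /\ Z.even m = true).
Proof.
  destruct (Z.ltb_spec 0 m); [left; left; assumption|].
  destruct (Z.even m) eqn:Hev; [right; split; [assumption | reflexivity]|].
  left; right; rewrite <- Z.negb_even, Hev; reflexivity.
Qed.

Lemma nonpole_add_even m k : nonpole m -> nonpole (m + 2 * Z.of_nat k).
Proof.
  intros [Hm|Hm]; [left; lia | right; rewrite Z.odd_add_mul_2; assumption].
Qed.

Lemma rgamma_half_nonpole m : nonpole m -> rgamma_half m = / Gamma_half m.
Proof.
  intros Hm; unfold rgamma_half.
  replace ((m <=? 0)%Z && Z.even m)%bool with false; [reflexivity|].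
  destruct Hm as [Hm|Hm].
  - replace (m <=? 0)%Z with false by (symmetry; apply Z.leb_gt; assumption); reflexivity.
  - rewrite <- Z.negb_odd, Hm, Bool.andb_false_r; reflexivity.
Qed.

Lemma rgamma_half_pole m : (m <= 0)%Z -> Z.even m = true -> rgamma_half m = 0.
Proof.
  intros Hle Hev; unfold rgamma_half.
  replace (m <=? 0)%Z with true by (symmetry; apply Z.leb_le; assumption).
  rewrite Hev; reflexivity.
Qed.

Lemma neg_prod_shift m q : neg_prod m (S q) = IZR m / 2 * neg_prod (m + 2) q.
Proof.
  induction q as [|q IH].
  - simpl; rewrite plus_IZR; simpl (INR 1); field.
  - change (neg_prod m (S (S q))) with (neg_prod m (S q) * (IZR m + 2 * INR (S (S q))) / 2).
    change (neg_prod (m + 2) (S q)) with (neg_prod (m + 2) q * (IZR (m + 2) + 2 * INR (S q)) / 2).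
    rewrite IH, plus_IZR, !S_INR; field.
Qed.

Lemma neg_prod_neq0 m q : IZR m + 2 * INR q < 0 -> neg_prod m q <> 0.
Proof.
  induction q as [|q IH]; intros H.
  - simpl in *; lra.
  - change (neg_prod m (S q)) with (neg_prod m q * (IZR m + 2 * INR (S q)) / 2).
    rewrite S_INR in H; pose proof (pos_INR q).
    assert (neg_prod m q <> 0) by (apply IH; lra).
    apply Rmult_integral_contrapositive_currified; [|apply Rinv_neq_0_compat; lra].
    apply Rmult_integral_contrapositive_currified; [assumption | rewrite S_INR; lra].
Qed.

Lemma Gamma_half_neg_odd p :
  Gamma_half (- (2 * Z.of_nat p + 1)) = sqrt PI / neg_prod (- (2 * Z.of_nat p + 1)) p.
Proof.
  unfold Gamma_half.
  replace (0 <? - (2 * Z.of_nat p + 1))%Z with false by (symmetry; apply Z.ltb_ge; lia).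
  replace (Z.even (- (2 * Z.of_nat p + 1))) with false
    by (rewrite Z.even_opp, Z.add_comm, Z.even_add_mul_2; reflexivity).
  replace (- - (2 * Z.of_nat p + 1) - 1)%Z with (Z.of_nat p * 2)%Z by lia.
  rewrite Z.div_mul, Nat2Z.id by lia; reflexivity.
Qed.

Lemma neg_prod_neg_odd_neq0 p : neg_prod (- (2 * Z.of_nat p + 1)) p <> 0.
Proof. apply neg_prod_neq0; rewrite opp_IZR, plus_IZR, mult_IZR, <- INR_IZR_INZ; lra. Qed.

Lemma nonpole_cases m : nonpole m ->
  (exists k, (1 <= k)%nat /\ m = Z.of_nat k) \/ (exists p, m = (- (2 * Z.of_nat p + 1))%Z).
Proof.
  intros Hm; destruct (Z.ltb_spec 0 m) as [Hpos|Hle].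
  - left; exists (Z.to_nat m); split; lia.
  - destruct Hm as [|Hodd]; [lia|].
    right; apply Z.odd_spec in Hodd; destruct Hodd as [z Hz].
    exists (Z.to_nat (- z - 1)); lia.
Qed.

Lemma Gamma_half_neq0 m : nonpole m -> Gamma_half m <> 0.
Proof.
  intros Hm; destruct (nonpole_cases m Hm) as [[k [Hk ->]]|[p ->]].
  - rewrite Gamma_half_of_nat by assumption; apply Rgt_not_eq, gamma_pos_gt0, Hk.
  - rewrite Gamma_half_neg_odd; pose proof (sqrt_lt_R0 PI PI_RGT_0).
    apply Rmult_integral_contrapositive_currified; [lra|].
    apply Rinv_neq_0_compat, neg_prod_neg_odd_neq0.
Qed.

Lemma Gamma_half_add2 m : nonpole m -> Gamma_half (m + 2) = IZR m / 2 * Gamma_half m.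
Proof.
  intros Hm; destruct (nonpole_cases m Hm) as [[k [Hk ->]]|[[|p] ->]].
  - replace (Z.of_nat k + 2)%Z with (Z.of_nat (S (S k))) by lia.
    rewrite !Gamma_half_of_nat, gamma_pos_SS, <- INR_IZR_INZ by lia; reflexivity.
  - rewrite Gamma_half_neg_odd; unfold Gamma_half; simpl; field.
  - replace (- (2 * Z.of_nat (S p) + 1) + 2)%Z with (- (2 * Z.of_nat p + 1))%Z by lia.
    rewrite !Gamma_half_neg_odd, neg_prod_shift.
    replace (- (2 * Z.of_nat (S p) + 1) + 2)%Z with (- (2 * Z.of_nat p + 1))%Z by lia.
    pose proof (neg_prod_neg_odd_neq0 p).
    field; split; [assumption | apply not_0_IZR; lia].
Qed.

Lemma Gamma_half_add_even m k : nonpole m ->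
  Gamma_half (m + 2 * Z.of_nat k) = Gamma_half m * prodR k (fun t => (IZR m + 2 * INR t) / 2).
Proof.
  intros Hm; induction k as [|k IH].
  - rewrite Z.add_0_r; simpl; ring.
  - replace (m + 2 * Z.of_nat (S k))%Z with (m + 2 * Z.of_nat k + 2)%Z by lia.
    rewrite Gamma_half_add2, IH by (apply nonpole_add_even; assumption).
    rewrite plus_IZR, mult_IZR, <- INR_IZR_INZ; simpl; ring.
Qed.

Lemma prodR_ext k f g : (forall t, (t < k)%nat -> f t = g t) -> prodR k f = prodR k g.
Proof.
  induction k as [|k IH]; intros E; simpl; [reflexivity|].
  rewrite (E k), IH by (lia || (intros; apply E; lia)); reflexivity.
Qed.

Lemma prodR_div k f g : (forall t, g t <> 0) ->
  prodR k (fun t => f t / g t) * prodR k g = prodR k f.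
Proof. intros Hg; induction k as [|k IH]; simpl; [ring|]. rewrite <- IH; field; apply Hg. Qed.

Lemma prodR_eq0 k f u : (u < k)%nat -> f u = 0 -> prodR k f = 0.
Proof.
  induction k as [|k IH]; intros Hu Hf; [lia|]; simpl.
  destruct (Nat.eq_dec u k) as [->|Hne]; [rewrite Hf | rewrite IH by (assumption || lia)]; ring.
Qed.

(* For a pole [b] the left side vanishes through [rgamma_half b], and the right
   side through the factor [t = -b/2], which lies below [k] as [b + 2k > 0]. *)
Lemma Gamma_half_ratio_prod a b k : (0 < a)%Z -> (0 < b + 2 * Z.of_nat k)%Z ->
  Gamma_half a * rgamma_half (a + 2 * Z.of_nat k)
  * Gamma_half (b + 2 * Z.of_nat k) * rgamma_half b
  = prodR k (fun t => (IZR b + 2 * INR t) / (IZR a + 2 * INR t)).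
Proof.
  intros Ha Hbk.
  assert (Hna : nonpole a) by (left; assumption).
  assert (Ha_pos : forall t, 0 < IZR a + 2 * INR t).
  { intros t; apply IZR_lt in Ha; pose proof (pos_INR t); lra. }
  assert (Ha_t : forall t, (IZR a + 2 * INR t) / 2 <> 0) by (intros t; specialize (Ha_pos t); lra).
  assert (Hprod_a : prodR k (fun t => (IZR a + 2 * INR t) / 2) <> 0).
  { intros E; apply (Gamma_half_neq0 (a + 2 * Z.of_nat k)); [apply nonpole_add_even, Hna|].
    rewrite Gamma_half_add_even, E by exact Hna; ring. }
  rewrite (rgamma_half_nonpole (a + _)) by (apply nonpole_add_even, Hna).
  rewrite (Gamma_half_add_even a) by exact Hna.
  destruct (nonpole_or_pole b) as [Hnb | [Hle Hev]].
  - rewrite rgamma_half_nonpole, Gamma_half_add_even by assumption.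
    rewrite <- (prodR_div k (fun t => (IZR b + 2 * INR t) / 2) _ Ha_t).
    rewrite (prodR_ext k (fun t => (IZR b + 2 * INR t) / (IZR a + 2 * INR t))
      (fun t => (IZR b + 2 * INR t) / 2 / ((IZR a + 2 * INR t) / 2)))
      by (intros t _; specialize (Ha_pos t); field; lra).
    pose proof (Gamma_half_neq0 a Hna); pose proof (Gamma_half_neq0 b Hnb).
    field; repeat split; assumption.
  - rewrite rgamma_half_pole by assumption.
    apply Z.even_spec in Hev; destruct Hev as [z ->].
    rewrite Rmult_0_r; symmetry; apply (prodR_eq0 _ _ (Z.to_nat (- z))); [lia|].
    rewrite INR_IZR_INZ, Z2Nat.id, mult_IZR by lia.
    unfold Rdiv; rewrite opp_IZR; ring.
Qed.

Lemma Gamma_half_binomial e i : (i <= e)%nat ->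
  Gamma_half (2 * Z.of_nat (S e)) * rgamma_half (2 * Z.of_nat i + 2)
  * rgamma_half (2 * Z.of_nat (S e) - 2 * Z.of_nat i) = C e i.
Proof.
  intros Hi.
  rewrite !rgamma_half_nonpole by (left; lia).
  replace (2 * Z.of_nat (S e))%Z with (Z.of_nat (2 * e + 2)) by lia.
  replace (2 * Z.of_nat i + 2)%Z with (Z.of_nat (2 * i + 2)) by lia.
  replace (Z.of_nat (2 * e + 2) - 2 * Z.of_nat i)%Z with (Z.of_nat (2 * (e - i) + 2)) by lia.
  rewrite !Gamma_half_of_nat, !gamma_pos_even by lia; unfold C.
  pose proof (INR_fact_neq_0 i); pose proof (INR_fact_neq_0 (e - i)).
  field; split; assumption.
Qed.

Lemma Gamma_half_degree_ratio j m i : (2 <= j)%nat -> (i <= m)%nat ->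
  Gamma_half (2 * Z.of_nat j - 1) * rgamma_half (2 * Z.of_nat (j + m) - 1)
  * Gamma_half (2 * Z.of_nat (j + m) - 2 - Z.of_nat i) * rgamma_half (2 * Z.of_nat j - 2 - Z.of_nat i)
  = degree_ratio j m i.
Proof.
  intros Hj Hi.
  replace (2 * Z.of_nat (j + m) - 1)%Z with (2 * Z.of_nat j - 1 + 2 * Z.of_nat m)%Z by lia.
  replace (2 * Z.of_nat (j + m) - 2 - Z.of_nat i)%Z
    with (2 * Z.of_nat j - 2 - Z.of_nat i + 2 * Z.of_nat m)%Z by lia.
  rewrite Gamma_half_ratio_prod by lia.
  apply prodR_ext; intros t _.
  rewrite !minus_IZR, mult_IZR, <- !INR_IZR_INZ; reflexivity.
Qed.

Lemma degree_formula_Gamma j m e : (2 <= j)%nat -> (e <= m)%nat ->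
  degree_formula j m e =
    Gamma_half (2 * Z.of_nat (S e)) * Gamma_half (2 * Z.of_nat j - 1)
    * rgamma_half (2 * Z.of_nat (j + m) - 1)
    * sum_f_R0 (fun i =>
        (-1) ^ i * Gamma_half (2 * Z.of_nat (j + m) - 2 - Z.of_nat i)
        * rgamma_half (2 * Z.of_nat i + 2)
        * rgamma_half (2 * Z.of_nat (S e) - 2 * Z.of_nat i)
        * rgamma_half (2 * Z.of_nat j - 2 - Z.of_nat i)) e.
Proof.
  intros Hj Hem; unfold degree_formula; rewrite scal_sum; apply sum_eq; intros i Hi.
  rewrite <- (Gamma_half_binomial e i), <- (Gamma_half_degree_ratio j m i) by lia.
  ring.
Qed.

Theorem proposition3p1 (n j d : nat) :
  (2 <= j <= n)%nat -> (1 <= d <= n - j + 1)%nat ->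
  port_deg_prob n j d =
    Gamma_half (2 * Z.of_nat d) * Gamma_half (2 * Z.of_nat j - 1)
    * rgamma_half (2 * Z.of_nat n - 1)
    * sum_f_R0 (fun i =>
        (-1) ^ i * Gamma_half (2 * Z.of_nat n - 2 - Z.of_nat i)
        * rgamma_half (2 * Z.of_nat i + 2)
        * rgamma_half (2 * Z.of_nat d - 2 * Z.of_nat i)
        * rgamma_half (2 * Z.of_nat j - 2 - Z.of_nat i))
      (d - 1).
Proof.
  intros Hj Hd.
  destruct d as [|e]; [lia|]; replace (S e - 1)%nat with e by lia.
  replace n with (j + (n - j))%nat by lia.
  rewrite port_deg_prob_degree_dist, degree_dist_eq_formula, degree_formula_Gamma by lia.
  reflexivity.
Qed.
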